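(* Let $n\ge2$, $H>1$, $\mu>0$. Assume the hyperbolic Delaunay unduloid $\mathcal{D}_H(\mu)$ is not a cylinder, i.e. its profile function $\varphi$ is nonconstant. Normalize $\varphi$ so that $\varphi(0)=\alpha_-(\mu)=\min\varphi$, and let $\tau(\mu)$ be its period. Let $$a(t)=\frac{\varphi'(t)}{\cos\varphi(t)\sqrt{1+\varphi'(t)^2}},$$ regarded as a function on $\mathcal{D}_H(\mu)$. Then: 1. $(\Delta-V)a=0$; 2. $a$ vanishes exactly at the points $t=k\tau(\mu)/2$, $k\in\mathbb{Z}$; 3. $a'$ has exactly two zeros $\zeta_1(\mu),\zeta_2(\mu)$ in $[0,\tau(\mu)]$, and they satisfy $0<\zeta_1(\mu)<\tau(\mu)/2<\zeta_2(\mu)<\tau(\mu)$.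
   Context: Use the upper half-space model $\{(x_1,\dots,x_n,y):y>0\}$ of $\mathbb{H}^{n+1}$. The function $\varphi:\mathbb{R}\to(0,\pi/2)$ solves $$\mu=\frac{(\tan\varphi)^{n-1}}{\cos\varphi\sqrt{1+\varphi'^2}}-H(\tan\varphi)^n.$$ The unduloid $\mathcal{D}_H(\mu)$ is parametrized by $\Phi(t,\omega)=(e^t\sin\varphi(t)\omega,e^t\cos\varphi(t))$; it has constant normalized mean curvature $H$. The function $\varphi$ is $\tau(\mu)$-periodic and symmetric about the points $k\tau(\mu)/2$. $\Delta$ is the non-negative Laplace–Beltrami operator, and $V=\|B\|^2-n$. The function $a$ equals $\langle N,\mathcal{Y}\rangle$, where $N$ is the unit normal and $\mathcal{Y}$ is the Killing field of hyperbolic translation along the axis. *)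

From Stdlib Require Import Reals ZArith.
From Coquelicot Require Import Coquelicot.
Open Scope R_scope.

(* Profile of the rotational hypersurface Phi(t,w) = (e^t sin(phi t) w, e^t cos(phi t))
   in the upper half-space model: Euclidean distance to the axis r(t) and height y(t). *)
Definition prof_r (phi : R -> R) (t : R) : R := exp t * sin (phi t).
Definition prof_y (phi : R -> R) (t : R) : R := exp t * cos (phi t).

Definition speed (phi : R -> R) (t : R) : R :=
  sqrt (Derive (prof_r phi) t ^ 2 + Derive (prof_y phi) t ^ 2).

(* Induced hyperbolic metric on D_H(mu):  g = A(t)^2 dt^2 + rho(t)^2 g_{S^{n-1}},
   with A = speed / y  and  rho = r / y. *)
Definition metA (phi : R -> R) (t : R) : R := speed phi t / prof_y phi t.
Definition warp (phi : R -> R) (t : R) : R := prof_r phi t / prof_y phi t.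

(* Non-negative Laplace-Beltrami operator of g applied to a function f(t)
   depending only on t (rotationally invariant function on the hypersurface):
   Delta f = - 1/(A rho^{n-1}) d/dt ( rho^{n-1} f' / A ). *)
Definition lapLB (n : nat) (phi : R -> R) (f : R -> R) (t : R) : R :=
  - / (metA phi t * warp phi t ^ (n - 1))
    * Derive (fun s => warp phi s ^ (n - 1) * Derive f s / metA phi s) t.

(* Principal curvatures of the hypersurface of revolution in H^{n+1}
   (unit normal N_E = (-y', r')/|c'| and the conformal change kappa = y kappa_E + N_E^y):
   kappa1 along the profile, kappa2 (multiplicity n-1) along the spheres. *)
Definition kappa1 (phi : R -> R) (t : R) : R :=
  let r' := Derive (prof_r phi) t in
  let y' := Derive (prof_y phi) t in
  let r'' := Derive (Derive (prof_r phi)) t in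
  let y'' := Derive (Derive (prof_y phi)) t in
  prof_y phi t * (r' * y'' - y' * r'') / speed phi t ^ 3 + r' / speed phi t.

Definition kappa2 (phi : R -> R) (t : R) : R :=
  let r' := Derive (prof_r phi) t in
  let y' := Derive (prof_y phi) t in
  (prof_y phi t * y' / prof_r phi t + r') / speed phi t.

Definition normB2 (n : nat) (phi : R -> R) (t : R) : R :=
  kappa1 phi t ^ 2 + INR (n - 1) * kappa2 phi t ^ 2.
Definition Vpot (n : nat) (phi : R -> R) (t : R) : R := normB2 n phi t - INR n.

Definition a_fun (phi : R -> R) (t : R) : R :=
  Derive phi t / (cos (phi t) * sqrt (1 + Derive phi t ^ 2)).

Definition unduloid_eq (n : nat) (H mu : R) (phi : R -> R) : Prop :=
  forall t, mu = tan (phi t) ^ (n - 1) / (cos (phi t) * sqrt (1 + Derive phi t ^ 2))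
                 - H * tan (phi t) ^ n.

From Stdlib Require Import Reals ZArith Lra Lia Classical.
From Coquelicot Require Import Coquelicot.
Open Scope R_scope.

(* Write n = k + 2 and X = tan phi.  Solved for the square root, the profile equation reads
   cos phi * sqrt (1 + phi'^2) = 1 / v(X) with v(X) = mu X^(1-n) + H X, so that a = phi' v(X)
   and phi'^2 v(X)^2 = W(X) := 1 + X^2 - v(X)^2.  For H > 1 the function W is strictly concave
   on (0, oo), so X oscillates between the two roots X(0) < M of W, which are exactly the
   values where phi' vanishes, and differentiating gives a' = (1 + X^2) W'(X) / (2 v(X)).
   Since W' decreases from W'(X(0)) > 0 to W'(M) < 0 while X increases on [0, tau/2], a' has
   exactly one zero there, and one in [tau/2, tau] by symmetry.
   The zeros of a are those of phi'.  The autonomous equation phi'^2 = W/v^2 (in the variable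
   phi) has non-degenerate turning points, so by separation of variables its solutions are
   determined by position and velocity at one time; hence phi is symmetric about each of its
   critical points, and minimality of tau leaves only the points j tau/2.
   Finally, expressing the metric and the principal curvatures through X (kappa1 = v'(X),
   kappa2 = v(X)/X) reduces (Delta - V) a = 0 to the Euler equation
   X^2 v'' + (n-1) X v' = (n-1) v. *)

(** * Calculus on the real line *)

Lemma ex_derive_continuous_R (f : R -> R) x : ex_derive f x -> continuous f x.
Proof. apply (ex_derive_continuous (K := R_AbsRing) (V := R_NormedModule)). Qed.

Lemma continuity_of_ex_derive (f : R -> R) : (forall x, ex_derive f x) -> continuity f.
Proof. intros Hd x. apply continuity_pt_filterlim, ex_derive_continuous_R, Hd. Qed.

Lemma pow2_eq_0 x : x ^ 2 = 0 -> x = 0.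
Proof. intros E. apply NNPP; intros Hx. exact (pow_nonzero x 2 Hx E). Qed.

Lemma MVT_is_derive (f df : R -> R) a b : a < b ->
  (forall c, a <= c <= b -> is_derive f c (df c)) ->
  exists c, a < c < b /\ f b - f a = df c * (b - a).
Proof.
  intros Hab Hd. destruct (MVT_cor2 f df a b Hab) as [c [Hfc Hc]].
  - intros c Hc; apply is_derive_Reals, Hd, Hc.
  - exists c; auto.
Qed.

Lemma strict_incr_of_derive_pos (f df : R -> R) a b :
  (forall c, a <= c <= b -> is_derive f c (df c)) -> (forall c, a < c < b -> 0 < df c) ->
  forall x y, a <= x -> x < y -> y <= b -> f x < f y.
Proof.
  intros Hd Hpos x y Hx Hxy Hy.
  destruct (MVT_is_derive f df x y Hxy) as [c [Hc E]].
  - intros c Hc; apply Hd; lra.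
  - assert (0 < df c) by (apply Hpos; lra). nra.
Qed.

Lemma strict_decr_of_derive_neg (f df : R -> R) a b :
  (forall c, a <= c <= b -> is_derive f c (df c)) -> (forall c, a < c < b -> df c < 0) ->
  forall x y, a <= x -> x < y -> y <= b -> f y < f x.
Proof.
  intros Hd Hneg x y Hx Hxy Hy.
  enough (- f x < - f y) by lra.
  apply (strict_incr_of_derive_pos (fun t => - f t) (fun t => - df t) a b); auto.
  - intros c Hc. apply (is_derive_opp f), Hd, Hc.
  - intros c Hc. specialize (Hneg c Hc). lra.
Qed.

Lemma eq_of_derive_zero (g : R -> R) l r : (forall c, l < c < r -> is_derive g c 0) ->
  forall x y, l < x < r -> l < y < r -> g x = g y.
Proof.
  intros Hd.
  assert (Hle : forall x y, l < x < r -> l < y < r -> x < y -> g x = g y).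
  { intros x y Hx Hy Hxy.
    destruct (MVT_is_derive g (fun _ => 0) x y Hxy) as [c [_ E]]; [|lra].
    intros c Hc; apply Hd; lra. }
  intros x y Hx Hy. destruct (Rtotal_order x y) as [|[->|]]; auto.
  symmetry; auto.
Qed.

Lemma continuous_eps_delta (f : R -> R) x : continuous f x ->
  forall eps, 0 < eps -> exists d, 0 < d /\ forall y, Rabs (y - x) < d -> Rabs (f y - f x) < eps.
Proof.
  intros Hc eps Heps.
  destruct (proj2 (continuity_pt_filterlim f x) Hc eps Heps) as [d [Hd Hball]].
  exists d; split; auto.
  intros y Hy. destruct (Req_dec y x) as [->|Hne].
  - rewrite Rminus_diag, Rabs_R0; auto.
  - apply Hball; repeat split; auto.
Qed.

Lemma continuous_eq_left (f g : R -> R) t0 s : t0 < s -> continuous f s -> continuous g s ->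
  (forall u, t0 <= u < s -> f u = g u) -> f s = g s.
Proof.
  intros Hs Hf Hg Heq.
  destruct (Req_dec (f s - g s) 0) as [|Hne]; [lra|exfalso].
  assert (Hc : continuous (fun u => f u - g u) s)
    by (apply (continuous_minus (V := R_NormedModule)); auto).
  destruct (continuous_eps_delta _ s Hc _ (Rabs_pos_lt _ Hne)) as [d [Hd Hball]].
  set (u := Rmax t0 (s - d / 2)).
  assert (Hu : t0 <= u < s /\ Rabs (u - s) < d).
  { unfold u, Rmax; destruct Rle_dec; split; try (apply Rabs_def1); lra. }
  specialize (Hball u (proj2 Hu)). rewrite (Heq u (proj1 Hu)) in Hball.
  replace (g u - g u - (f s - g s)) with (- (f s - g s)) in Hball by ring.
  rewrite Rabs_Ropp in Hball. lra.
Qed.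

Lemma is_derive_left_const (f : R -> R) s d l : 0 < d ->
  (forall u, s - d < u <= s -> f u = f s) -> is_derive f s l -> l = 0.
Proof.
  intros Hd Hconst Hder. apply is_derive_Reals in Hder.
  destruct (Req_dec l 0) as [|Hl]; auto. exfalso.
  destruct (Hder (Rabs l) (Rabs_pos_lt _ Hl)) as [dl Hdl].
  pose proof (cond_pos dl) as Hdl0.
  set (h := - Rmin d dl / 2).
  assert (Hm1 := Rmin_l d dl). assert (Hm2 := Rmin_r d dl).
  assert (Hm : 0 < Rmin d dl) by (apply Rmin_pos; auto).
  assert (Hh : h <> 0) by (unfold h; lra).
  assert (Hh' : Rabs h < dl) by (unfold h; rewrite Rabs_left; lra).
  specialize (Hdl h Hh Hh'). rewrite Hconst in Hdl by (unfold h; lra).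
  replace ((f s - f s) / h - l) with (- l) in Hdl by (field; auto).
  rewrite Rabs_Ropp in Hdl. lra.
Qed.

Lemma is_derive_pos_right (g : R -> R) s l : is_derive g s l -> 0 < l ->
  exists d, 0 < d /\ forall u, s < u < s + d -> g s < g u.
Proof.
  intros Hder Hl. apply is_derive_Reals in Hder.
  destruct (Hder l Hl) as [d Hd].
  exists d; split; [apply cond_pos|].
  intros u Hu.
  assert (Hh : u - s <> 0) by lra.
  assert (Hh' : Rabs (u - s) < d) by (rewrite Rabs_right; lra).
  specialize (Hd (u - s) Hh Hh'). replace (s + (u - s)) with u in Hd by ring.
  apply Rabs_def2 in Hd. destruct Hd as [_ Hd].
  assert (0 < (g u - g s) / (u - s)) by lra.
  assert (0 < (g u - g s) / (u - s) * (u - s)) by (apply Rmult_lt_0_compat; lra).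
  replace ((g u - g s) / (u - s) * (u - s)) with (g u - g s) in * by (field; auto). lra.
Qed.

Lemma real_induction (P : R -> Prop) t0 :
  (forall s, t0 <= s -> (forall u, t0 <= u < s -> P u) -> P s) ->
  (forall s, t0 <= s -> (forall u, t0 <= u <= s -> P u) ->
     exists d, 0 < d /\ forall u, s < u < s + d -> P u) ->
  forall t, t0 <= t -> P t.
Proof.
  intros Hclosed Hopen t Ht. apply NNPP; intros HPt.
  set (S := fun s => t0 <= s /\ forall u, t0 <= u <= s -> P u).
  assert (Hbound : bound S).
  { exists t. intros s [Hs HP]. destruct (Rle_lt_dec s t); auto.
    exfalso; apply HPt, HP; lra. }
  assert (HS0 : S t0).
  { split; [lra|]. intros u Hu. replace u with t0 by lra.
    apply Hclosed; [lra|]. intros v Hv; lra. }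
  destruct (completeness S Hbound (ex_intro _ t0 HS0)) as [s [Hub Hlub]].
  assert (Hs : t0 <= s) by (apply Hub, HS0).
  assert (Hbelow : forall u, t0 <= u < s -> P u).
  { intros u Hu. apply NNPP; intros HPu.
    assert (s <= u); [|lra].
    apply Hlub. intros s' [Hs' HP']. destruct (Rle_lt_dec s' u); auto.
    exfalso; apply HPu, HP'; lra. }
  assert (Hupto : forall u, t0 <= u <= s -> P u).
  { intros u Hu. destruct (Req_dec u s) as [->|]; [apply Hclosed|apply Hbelow]; auto; lra. }
  destruct (Hopen s Hs Hupto) as [d [Hd Hbeyond]].
  assert (Hbeyond' : S (s + d / 2)).
  { split; [lra|]. intros u Hu. destruct (Rle_lt_dec u s); [apply Hupto|apply Hbeyond]; lra. }
  pose proof (Hub _ Hbeyond'). lra.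
Qed.

(* Differentiating [f'^2 = Psi f] only yields [f' * E = 0], where [E = 0] is the second-order
   form of the equation.  A solution could a priori rest at a critical point where [E <> 0];
   real induction shows that it would then rest forever. *)
Lemma derive_mul_eq0_cofactor_eq0 (f E : R -> R) :
  (forall t, ex_derive f t) -> (forall t, ex_derive (Derive f) t) ->
  (forall t, continuous E t) -> (forall t, Derive f t * E t = 0) ->
  (forall t, Derive f t = 0 -> Derive (Derive f) t = 0 -> E t <> 0) ->
  (forall t0, exists t1, t0 < t1 /\ f t1 <> f t0) -> forall t, E t = 0.
Proof.
  intros Hd1 Hd2 HEc Hprod Hnondeg Hnonconst t0.
  apply NNPP; intros HE0.
  assert (Hflat : forall x, E x <> 0 ->
    exists d, 0 < d /\ forall u, Rabs (u - x) < d -> Derive f u = 0).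
  { intros x Hx.
    destruct (continuous_eps_delta E x (HEc x) _ (Rabs_pos_lt _ Hx)) as [d [Hd Hball]].
    exists d; split; auto. intros u Hu.
    assert (E u <> 0).
    { intros Eu. specialize (Hball u Hu). rewrite Eu, Rminus_0_l, Rabs_Ropp in Hball. lra. }
    destruct (Rmult_integral _ _ (Hprod u)); tauto. }
  assert (Hcrit : forall t, t0 <= t -> Derive f t = 0).
  { apply real_induction.
    - intros s Hs Hbelow. destruct (Req_dec s t0) as [->|Hne].
      + destruct (Rmult_integral _ _ (Hprod t0)); tauto.
      + apply (continuous_eq_left (Derive f) (fun _ => 0) t0 s); auto.
        * lra.
        * apply ex_derive_continuous_R, Hd2.
        * apply continuous_const.
    - intros s Hs Hupto.
      assert (HEs : E s <> 0).
      { destruct (Req_dec s t0) as [->|Hne]; auto.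
        apply Hnondeg; [apply Hupto; lra|].
        apply (is_derive_left_const (Derive f) s (s - t0)); [lra| |apply Derive_correct, Hd2].
        intros u Hu. rewrite !Hupto by lra. reflexivity. }
      destruct (Hflat s HEs) as [d [Hd Hball]].
      exists d; split; auto. intros u Hu. apply Hball, Rabs_def1; lra. }
  destruct (Hnonconst t0) as [t1 [Ht1 Hft1]].
  destruct (MVT_is_derive f (Derive f) t0 t1 Ht1) as [c [Hc Hmvt]].
  - intros c Hc. apply Derive_correct, Hd1.
  - rewrite Hcrit in Hmvt by lra. lra.
Qed.

(** * The equation [f'^2 = Psi f] between two turning points *)

Section TransitTime.

Variables (A B : R) (Psi : R -> R).
Hypothesis Psi_cont : forall y, A < y < B -> continuous Psi y.
Hypothesis Psi_pos : forall y, A < y < B -> 0 < Psi y.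
Hypothesis Psi_A : Psi A = 0.
Hypothesis Psi_B : Psi B = 0.

Record turning_solution (f : R -> R) : Prop := {
  ts_ex_derive : forall t, ex_derive f t;
  ts_ex_derive2 : forall t, ex_derive (Derive f) t;
  ts_range : forall t, A <= f t <= B;
  ts_eq : forall t, Derive f t ^ 2 = Psi (f t);
  ts_turn_A : forall t, f t = A -> 0 < Derive (Derive f) t;
  ts_turn_B : forall t, f t = B -> Derive (Derive f) t < 0 }.

(* Separation of variables: where [f' <> 0], a solution satisfies [transit_time (f t) = +-t + c]. *)
Definition transit_time (y : R) : R := RInt (fun u => / sqrt (Psi u)) ((A + B) / 2) y.

Lemma inv_sqrt_Psi_cont y : A < y < B -> continuous (fun u => / sqrt (Psi u)) y.
Proof.
  intros Hy. apply continuous_Rinv_comp.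
  - apply continuous_sqrt_comp, Psi_cont, Hy.
  - apply Rgt_not_eq, sqrt_lt_R0, Psi_pos, Hy.
Qed.

Lemma is_derive_transit_time y : A < y < B -> is_derive transit_time y (/ sqrt (Psi y)).
Proof.
  intros Hy. apply (is_derive_RInt (fun u => / sqrt (Psi u)) transit_time ((A + B) / 2) y).
  - set (e := Rmin (y - A) (B - y)).
    assert (He : 0 < e) by (unfold e; apply Rmin_pos; lra).
    assert (He1 := Rmin_l (y - A) (B - y)). assert (He2 := Rmin_r (y - A) (B - y)).
    fold e in He1, He2.
    exists (mkposreal e He). intros z Hz. change (Rabs (z - y) < e) in Hz.
    apply Rabs_def2 in Hz.
    apply (RInt_correct (V := R_CompleteNormedModule)), ex_RInt_continuous.
    intros w Hw. apply inv_sqrt_Psi_cont.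
    unfold Rmin, Rmax in Hw; destruct Rle_dec; lra.
  - apply inv_sqrt_Psi_cont, Hy.
Qed.

Lemma transit_time_incr x y : A < x < B -> A < y < B -> x < y -> transit_time x < transit_time y.
Proof.
  intros Hx Hy Hxy.
  apply (strict_incr_of_derive_pos _ (fun y => / sqrt (Psi y)) x y); try lra.
  - intros c Hc. apply is_derive_transit_time. lra.
  - intros c Hc. apply Rinv_0_lt_compat, sqrt_lt_R0, Psi_pos. lra.
Qed.

Lemma transit_time_inj x y : A < x < B -> A < y < B -> transit_time x = transit_time y -> x = y.
Proof.
  intros Hx Hy E. destruct (Rtotal_order x y) as [Hxy|[|Hxy]]; auto.
  - pose proof (transit_time_incr x y Hx Hy Hxy). lra.
  - pose proof (transit_time_incr y x Hy Hx Hxy). lra.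
Qed.

Section Solution.

Variable f : R -> R.
Hypothesis f_sol : turning_solution f.

Lemma ts_is_derive t : is_derive f t (Derive f t).
Proof. apply Derive_correct, (ts_ex_derive _ f_sol). Qed.

Lemma ts_continuous t : continuous f t.
Proof. apply ex_derive_continuous_R, (ts_ex_derive _ f_sol). Qed.

Lemma ts_continuous_derive t : continuous (Derive f) t.
Proof. apply ex_derive_continuous_R, (ts_ex_derive2 _ f_sol). Qed.

Lemma ts_interior t : Derive f t <> 0 -> A < f t < B.
Proof.
  intros Hd. pose proof (ts_range _ f_sol t). pose proof (ts_eq _ f_sol t) as E.
  assert (0 < Derive f t ^ 2) by (apply pow2_gt_0; auto).
  split; apply Rnot_le_lt; intros Hle.
  - replace (f t) with A in E by lra. lra.
  - replace (f t) with B in E by lra. lra.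
Qed.

Lemma ts_critical t : Derive f t = 0 -> f t = A \/ f t = B.
Proof.
  intros Hd. pose proof (ts_range _ f_sol t). pose proof (ts_eq _ f_sol t) as E.
  rewrite Hd in E.
  destruct (Req_dec (f t) A); [now left|]. destruct (Req_dec (f t) B); [now right|].
  assert (0 < Psi (f t)) by (apply Psi_pos; lra). simpl in E. lra.
Qed.

Lemma transit_time_along_branch (sg l r : R) : sg = 1 \/ sg = -1 ->
  (forall t, l < t < r -> 0 < sg * Derive f t) ->
  exists c, forall t, l < t < r -> transit_time (f t) = sg * t + c.
Proof.
  intros Hsg Hbr.
  destruct (Rlt_le_dec l r) as [Hlr|Hlr]; [|exists 0; intros; lra].
  exists (transit_time (f ((l + r) / 2)) - sg * ((l + r) / 2)).
  intros t Ht.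
  enough (Hconst : transit_time (f t) - sg * t
                   = transit_time (f ((l + r) / 2)) - sg * ((l + r) / 2)) by lra.
  apply (eq_of_derive_zero (fun t => transit_time (f t) - sg * t) l r); try lra.
  intros c Hc. specialize (Hbr c Hc).
  assert (Hfc : A < f c < B) by (apply ts_interior; destruct Hsg; subst; lra).
  assert (Hsqrt : sqrt (Psi (f c)) = sg * Derive f c).
  { rewrite <- (ts_eq _ f_sol), <- (sqrt_pow2 (sg * Derive f c)) by lra.
    f_equal. destruct Hsg; subst; ring. }
  replace 0 with (Derive f c * / sqrt (Psi (f c)) - sg * 1).
  2:{ rewrite Hsqrt. destruct Hsg; subst; field; lra. }
  apply (is_derive_minus (fun t => transit_time (f t)) (fun t => sg * t)).
  - apply (is_derive_comp transit_time f c).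
    + apply is_derive_transit_time, Hfc.
    + apply ts_is_derive.
  - auto_derive; auto.
Qed.

Lemma ts_leaves_A s : f s = A -> exists d, 0 < d /\ forall u, s < u < s + d -> 0 < Derive f u.
Proof.
  intros Hs.
  assert (Hd0 : Derive f s = 0).
  { apply pow2_eq_0. rewrite (ts_eq _ f_sol), Hs. exact Psi_A. }
  destruct (is_derive_pos_right (Derive f) s (Derive (Derive f) s)) as [d [Hd Hpos]].
  - apply Derive_correct, (ts_ex_derive2 _ f_sol).
  - apply (ts_turn_A _ f_sol), Hs.
  - exists d; split; auto. intros u Hu. rewrite <- Hd0. auto.
Qed.

End Solution.

(* For a solution leaving [A] at time [s], [s + c] is the infimum of [transit_time]; this
   inequality is all that is needed of that fact, and avoids asking whether the integral
   converges at [A]. *)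
Lemma transit_offset_le f1 f2 s d c1 c2 : 0 < d -> f2 s = A -> continuous f2 s ->
  (forall t, s < t < s + d -> A < f1 t < B /\ A < f2 t < B) ->
  (forall t, s < t < s + d -> transit_time (f1 t) = t + c1) ->
  (forall t, s < t < s + d -> transit_time (f2 t) = t + c2) ->
  c2 <= c1.
Proof.
  intros Hd Hf2s Hcont Hrange Hc1 Hc2.
  apply Rle_plus_epsilon. intros eps Heps.
  set (u := s + Rmin d eps / 2).
  assert (Hm1 := Rmin_l d eps). assert (Hm2 := Rmin_r d eps).
  assert (Hm : 0 < Rmin d eps) by (apply Rmin_pos; auto).
  assert (Hu : s < u < s + d) by (unfold u; lra).
  destruct (Hrange u Hu) as [Hf1u _].
  destruct (continuous_eps_delta f2 s Hcont (f1 u - A)) as [dl [Hdl Hball]]; [lra|].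
  set (v := s + Rmin d dl / 2).
  assert (Hn1 := Rmin_l d dl). assert (Hn2 := Rmin_r d dl).
  assert (Hn : 0 < Rmin d dl) by (apply Rmin_pos; auto).
  assert (Hv : s < v < s + d) by (unfold v; lra).
  assert (Hf2v : f2 v < f1 u).
  { assert (Hvs : Rabs (v - s) < dl) by (apply Rabs_def1; unfold v; lra).
    specialize (Hball v Hvs). apply Rabs_def2 in Hball. lra. }
  pose proof (transit_time_incr (f2 v) (f1 u) (proj2 (Hrange v Hv)) Hf1u Hf2v) as Hlt.
  rewrite Hc1, Hc2 in Hlt by auto. unfold u, v in *. lra.
Qed.

Lemma ts_unique_from_A f1 f2 s : turning_solution f1 -> turning_solution f2 ->
  f1 s = A -> f2 s = A -> exists d, 0 < d /\ forall u, s <= u < s + d -> f1 u = f2 u.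
Proof.
  intros S1 S2 E1 E2.
  destruct (ts_leaves_A f1 S1 s E1) as [d1 [Hd1 Hpos1]].
  destruct (ts_leaves_A f2 S2 s E2) as [d2 [Hd2 Hpos2]].
  set (d := Rmin d1 d2).
  assert (Hm1 := Rmin_l d1 d2). assert (Hm2 := Rmin_r d1 d2). fold d in Hm1, Hm2.
  assert (Hd : 0 < d) by (apply Rmin_pos; auto).
  assert (Hbr : forall g, turning_solution g -> (forall u, s < u < s + d -> 0 < Derive g u) ->
    (forall u, s < u < s + d -> A < g u < B) /\
    exists c, forall u, s < u < s + d -> transit_time (g u) = u + c).
  { intros g Sg Hg. split.
    - intros u Hu. apply (ts_interior g Sg). specialize (Hg u Hu). lra.
    - destruct (transit_time_along_branch g Sg 1 s (s + d)) as [c Hc]; [now left| |].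
      + intros u Hu. rewrite Rmult_1_l. auto.
      + exists c. intros u Hu. rewrite Hc by auto. ring. }
  destruct (Hbr f1 S1) as [Hr1 [c1 Hc1]]; [intros u Hu; apply Hpos1; lra|].
  destruct (Hbr f2 S2) as [Hr2 [c2 Hc2]]; [intros u Hu; apply Hpos2; lra|].
  assert (Hrange : forall u, s < u < s + d -> A < f1 u < B /\ A < f2 u < B) by auto.
  assert (Hrange' : forall u, s < u < s + d -> A < f2 u < B /\ A < f1 u < B) by auto.
  assert (Hc : c1 = c2).
  { apply Rle_antisym.
    - apply (transit_offset_le f2 f1 s d); auto. apply (ts_continuous f1 S1).
    - apply (transit_offset_le f1 f2 s d); auto. apply (ts_continuous f2 S2). }
  exists d; split; auto. intros u Hu.
  destruct (Req_dec u s) as [->|Hne]; [congruence|].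
  apply transit_time_inj; [apply Hr1; lra|apply Hr2; lra|].
  rewrite Hc1, Hc2 by lra. congruence.
Qed.

Lemma ts_unique_near_regular f1 f2 s : turning_solution f1 -> turning_solution f2 ->
  f1 s = f2 s -> Derive f1 s = Derive f2 s -> Derive f1 s <> 0 ->
  exists d, 0 < d /\ forall u, s <= u < s + d -> f1 u = f2 u.
Proof.
  intros S1 S2 E0 E1 Hreg.
  set (D := Derive f1 s) in *.
  assert (Hsg : exists sg, (sg = 1 \/ sg = -1) /\ 0 < sg * D).
  { destruct (Rlt_le_dec 0 D); [exists 1|exists (-1)]; split; auto; lra. }
  destruct Hsg as [sg [Hsg HsD]].
  destruct (continuous_eps_delta _ s (ts_continuous_derive f1 S1 s) _ HsD) as [d1 [Hd1 Hball1]].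
  destruct (continuous_eps_delta _ s (ts_continuous_derive f2 S2 s) _ HsD) as [d2 [Hd2 Hball2]].
  set (d := Rmin d1 d2).
  assert (Hm1 := Rmin_l d1 d2). assert (Hm2 := Rmin_r d1 d2). fold d in Hm1, Hm2.
  assert (Hd : 0 < d) by (apply Rmin_pos; auto).
  assert (Hbr : forall g dg, turning_solution g -> Derive g s = D -> d <= dg ->
    (forall u, Rabs (u - s) < dg -> Rabs (Derive g u - Derive g s) < sg * D) ->
    (forall u, s - d < u < s + d -> A < g u < B) /\
    exists c, forall u, s - d < u < s + d -> transit_time (g u) = sg * u + c).
  { intros g dg Sg Hgs Hdg Hball.
    assert (Hpos : forall u, s - d < u < s + d -> 0 < sg * Derive g u).
    { intros u Hu. assert (Hus : Rabs (u - s) < dg) by (apply Rabs_def1; lra).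
      specialize (Hball u Hus). rewrite Hgs in Hball. apply Rabs_def2 in Hball.
      destruct Hsg; subst sg; lra. }
    split.
    - intros u Hu. apply (ts_interior g Sg). specialize (Hpos u Hu).
      intros E. rewrite E in Hpos. lra.
    - apply (transit_time_along_branch g Sg); auto. }
  destruct (Hbr f1 d1 S1) as [Hr1 [c1 Hc1]]; auto.
  destruct (Hbr f2 d2 S2) as [Hr2 [c2 Hc2]]; auto.
  assert (Hc : c1 = c2).
  { pose proof (Hc1 s) as Q1. pose proof (Hc2 s) as Q2. rewrite E0 in Q1. lra. }
  exists d; split; auto. intros u Hu.
  apply transit_time_inj; [apply Hr1; lra|apply Hr2; lra|].
  rewrite Hc1, Hc2 by lra. congruence.
Qed.

End TransitTime.

Lemma is_derive_reflect (g : R -> R) c t : ex_derive g (c - t) ->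
  is_derive (fun t => g (c - t)) t (- Derive g (c - t)).
Proof.
  intros Hd.
  replace (- Derive g (c - t)) with ((-1) * Derive g (c - t)) by ring.
  apply (is_derive_comp g (fun t => c - t) t).
  - apply Derive_correct, Hd.
  - auto_derive; [auto|ring].
Qed.

Lemma turning_solution_reflect A B Psi f c : turning_solution A B Psi f ->
  turning_solution A B Psi (fun t => f (c - t)).
Proof.
  intros [Hd1 Hd2 Hrange Heq HtA HtB].
  assert (E1 : forall t, Derive (fun t => f (c - t)) t = - Derive f (c - t)).
  { intros t. apply is_derive_unique, is_derive_reflect, Hd1. }
  assert (D2 : forall t, is_derive (Derive (fun t => f (c - t))) t (Derive (Derive f) (c - t))).
  { intros t. apply (is_derive_ext (fun t => - Derive f (c - t))); [intros u; now rewrite E1|].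
    rewrite <- (Ropp_involutive (Derive (Derive f) (c - t))).
    apply (is_derive_opp (fun t => Derive f (c - t))), is_derive_reflect, Hd2. }
  assert (E2 : forall t, Derive (Derive (fun t => f (c - t))) t = Derive (Derive f) (c - t)).
  { intros t. apply is_derive_unique, D2. }
  split.
  - intros t. eexists. apply is_derive_reflect, Hd1.
  - intros t. eexists. apply D2.
  - intros t. apply Hrange.
  - intros t. rewrite E1, <- Heq. ring.
  - intros t Ht. rewrite E2. apply HtA, Ht.
  - intros t Ht. rewrite E2. apply HtB, Ht.
Qed.

Lemma turning_solution_opp A B Psi f : turning_solution A B Psi f ->
  turning_solution (- B) (- A) (fun y => Psi (- y)) (fun t => - f t).
Proof.
  intros [Hd1 Hd2 Hrange Heq HtA HtB].
  assert (E1 : forall t, Derive (fun t => - f t) t = - Derive f t) by (intros; apply Derive_opp).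
  assert (E2 : forall t, Derive (Derive (fun t => - f t)) t = - Derive (Derive f) t).
  { intros t. rewrite (Derive_ext _ _ t E1). apply Derive_opp. }
  split.
  - intros t. apply (ex_derive_opp (V := R_NormedModule) f), Hd1.
  - intros t. apply (ex_derive_ext (fun t => - Derive f t)); [intros u; now rewrite E1|].
    apply (ex_derive_opp (V := R_NormedModule) (Derive f)), Hd2.
  - intros t. specialize (Hrange t). lra.
  - intros t. rewrite E1, Ropp_involutive, <- Heq. ring.
  - intros t Ht. rewrite E2. assert (Derive (Derive f) t < 0) by (apply HtB; lra). lra.
  - intros t Ht. rewrite E2. assert (0 < Derive (Derive f) t) by (apply HtA; lra). lra.
Qed.

Section Uniqueness.

Variables (A B : R) (Psi : R -> R).
Hypothesis Psi_cont : forall y, A < y < B -> continuous Psi y.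
Hypothesis Psi_pos : forall y, A < y < B -> 0 < Psi y.
Hypothesis Psi_A : Psi A = 0.
Hypothesis Psi_B : Psi B = 0.

Let sol := turning_solution A B Psi.

Lemma ts_unique_from_B f1 f2 s : sol f1 -> sol f2 -> f1 s = B -> f2 s = B ->
  exists d, 0 < d /\ forall u, s <= u < s + d -> f1 u = f2 u.
Proof.
  intros S1 S2 E1 E2.
  assert (Hcont : forall y, - B < y < - A -> continuous (fun y => Psi (- y)) y).
  { intros y Hy. apply (continuous_comp Ropp Psi).
    - apply (continuous_opp (V := R_NormedModule)), continuous_id.
    - apply Psi_cont. lra. }
  assert (Hpos : forall y, - B < y < - A -> 0 < Psi (- y)) by (intros y Hy; apply Psi_pos; lra).
  assert (HB : Psi (- - B) = 0) by now rewrite Ropp_involutive.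
  assert (HA : Psi (- - A) = 0) by now rewrite Ropp_involutive.
  destruct (ts_unique_from_A (- B) (- A) (fun y => Psi (- y)) Hcont Hpos HB HA
              (fun t => - f1 t) (fun t => - f2 t) s) as [d [Hd Heq]].
  - now apply turning_solution_opp.
  - now apply turning_solution_opp.
  - now rewrite E1.
  - now rewrite E2.
  - exists d; split; auto. intros u Hu. specialize (Heq u Hu). simpl in Heq. lra.
Qed.

Lemma ts_unique_local f1 f2 s : sol f1 -> sol f2 -> f1 s = f2 s -> Derive f1 s = Derive f2 s ->
  exists d, 0 < d /\ forall u, s <= u < s + d -> f1 u = f2 u.
Proof.
  intros S1 S2 E0 E1.
  destruct (Req_dec (Derive f1 s) 0) as [Hcrit|Hreg].
  - destruct (ts_critical A B Psi Psi_pos f1 S1 s Hcrit) as [HA|HB].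
    + apply (ts_unique_from_A A B Psi); auto; congruence.
    + apply ts_unique_from_B; auto; congruence.
  - apply (ts_unique_near_regular A B Psi); auto.
Qed.

Lemma ts_unique_forward f1 f2 t0 : sol f1 -> sol f2 -> f1 t0 = f2 t0 ->
  Derive f1 t0 = Derive f2 t0 -> forall t, t0 <= t -> f1 t = f2 t.
Proof.
  intros S1 S2 E0 E1. apply real_induction.
  - intros s Hs Hbelow. destruct (Req_dec s t0) as [->|Hne]; auto.
    apply (continuous_eq_left f1 f2 t0 s); [lra|apply (ts_continuous A B Psi f1 S1)|
      apply (ts_continuous A B Psi f2 S2)|auto].
  - intros s Hs Hupto.
    assert (Ed : Derive f1 s = Derive f2 s).
    { destruct (Req_dec s t0) as [->|Hne]; auto.
      enough (Derive f1 s - Derive f2 s = 0) by lra.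
      apply (is_derive_left_const (fun t => f1 t - f2 t) s (s - t0)); [lra| |].
      - intros u Hu. rewrite !Hupto by lra. ring.
      - apply (is_derive_minus (V := R_NormedModule)); apply (ts_is_derive A B Psi); auto. }
    destruct (ts_unique_local f1 f2 s S1 S2 (Hupto s (conj Hs (Rle_refl s))) Ed) as [d [Hd Heq]].
    exists d; split; auto. intros u Hu. apply Heq. lra.
Qed.

Lemma ts_symmetric_at_critical f t1 : sol f -> Derive f t1 = 0 ->
  forall t, f (2 * t1 - t) = f t.
Proof.
  intros Sf Hcrit.
  assert (Hfw : forall t, t1 <= t -> f t = f (2 * t1 - t)).
  { apply (ts_unique_forward f (fun t => f (2 * t1 - t))); auto.
    - apply turning_solution_reflect, Sf.
    - f_equal. ring.
    - replace (Derive (fun t => f (2 * t1 - t)) t1) with (- Derive f (2 * t1 - t1)).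
      + replace (2 * t1 - t1) with t1 by ring. rewrite Hcrit. ring.
      + symmetry. apply is_derive_unique, is_derive_reflect, (ts_ex_derive _ _ _ _ Sf). }
  intros t. destruct (Rle_lt_dec t1 t).
  - symmetry; auto.
  - rewrite Hfw by lra. f_equal. ring.
Qed.

End Uniqueness.

(** * The potential of the profile equation *)

Section StrictlyConcave.

Variables (F dF : R -> R).
Hypothesis F_derive : forall x, 0 < x -> is_derive F x (dF x).
Hypothesis dF_decr : forall x y, 0 < x -> x < y -> dF y < dF x.

Lemma concave_pos_between_roots a b x : 0 < a -> a < x < b -> F a = 0 -> F b = 0 -> 0 < F x.
Proof.
  intros Ha Hx Fa Fb.
  destruct (MVT_is_derive F dF a x) as [c1 [Hc1 E1]]; [lra|intros c Hc; apply F_derive; lra|].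
  destruct (MVT_is_derive F dF x b) as [c2 [Hc2 E2]]; [lra|intros c Hc; apply F_derive; lra|].
  pose proof (dF_decr c1 c2 ltac:(lra) ltac:(lra)).
  apply Rnot_le_lt; intros HFx.
  assert (dF c1 <= 0) by (apply Rnot_lt_le; intros; nra).
  assert (0 <= dF c2) by (apply Rnot_lt_le; intros; nra).
  lra.
Qed.

Lemma concave_derive_zero_between_roots a b : 0 < a -> a < b -> F a = 0 -> F b = 0 ->
  exists c, a < c < b /\ dF c = 0.
Proof.
  intros Ha Hab Fa Fb.
  destruct (MVT_is_derive F dF a b) as [c [Hc E]]; [lra|intros c Hc; apply F_derive; lra|].
  exists c; split; auto. rewrite Fa, Fb in E.
  destruct (Rmult_integral (dF c) (b - a)); [lra|auto|lra].
Qed.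

Lemma concave_neg_beyond_roots a b x : 0 < a -> a < b -> b < x -> F a = 0 -> F b = 0 -> F x < 0.
Proof.
  intros Ha Hab Hx Fa Fb.
  destruct (concave_derive_zero_between_roots a b) as [c1 [Hc1 E1]]; auto.
  destruct (MVT_is_derive F dF b x) as [c2 [Hc2 E2]]; [lra|intros c Hc; apply F_derive; lra|].
  pose proof (dF_decr c1 c2 ltac:(lra) ltac:(lra)).
  assert (dF c2 * (x - b) < 0) by (apply Rmult_neg_pos; lra). lra.
Qed.

Lemma concave_derive_pos_at_root a x : 0 < a -> a < x -> F a = 0 -> 0 <= F x -> 0 < dF a.
Proof.
  intros Ha Hx Fa Fx.
  destruct (MVT_is_derive F dF a x) as [c [Hc E]]; [lra|intros c' Hc'; apply F_derive; lra|].
  pose proof (dF_decr a c Ha ltac:(lra)).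
  assert (0 <= dF c) by (apply Rnot_lt_le; intros; nra). lra.
Qed.

Lemma concave_derive_neg_at_root a b : 0 < a -> a < b -> F a = 0 -> F b = 0 -> dF b < 0.
Proof.
  intros Ha Hab Fa Fb.
  destruct (concave_derive_zero_between_roots a b) as [c [Hc E]]; auto.
  pose proof (dF_decr c b ltac:(lra) ltac:(lra)). lra.
Qed.

End StrictlyConcave.

Section ProfilePotential.

Variables (k : nat) (mu H : R).

(* For [n = k + 2] and [X = tan phi] the profile equation reads
   [cos phi * sqrt (1 + phi'^2) = / vfun X], hence [phi'^2 * vfun X ^ 2 = Wfun X];
   [d] and [d2] mark first and second derivatives. *)
Definition vfun (x : R) : R := mu / x ^ S k + H * x.
Definition dvfun (x : R) : R := H - INR (S k) * mu / x ^ S (S k).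
Definition d2vfun (x : R) : R := INR (S (S k)) * INR (S k) * mu / x ^ S (S (S k)).
Definition Wfun (x : R) : R := 1 + x ^ 2 - vfun x ^ 2.
Definition dWfun (x : R) : R := 2 * x - 2 * vfun x * dvfun x.
Definition d2Wfun (x : R) : R := 2 - 2 * dvfun x ^ 2 - 2 * vfun x * d2vfun x.

Lemma is_derive_vfun x : 0 < x -> is_derive vfun x (dvfun x).
Proof.
  intros Hx. unfold vfun, dvfun.
  assert (x ^ k <> 0) by (apply pow_nonzero; lra).
  auto_derive.
  - change (x * x ^ k) with (x ^ S k). apply pow_nonzero. lra.
  - change (match k with 0%nat => 1 | S _ => INR k + 1 end) with (INR (S k)).
    simpl. field. lra.
Qed.

Lemma is_derive_dvfun x : 0 < x -> is_derive dvfun x (d2vfun x).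
Proof.
  intros Hx. unfold dvfun, d2vfun.
  assert (x ^ k <> 0) by (apply pow_nonzero; lra).
  auto_derive.
  - change (x * (x * x ^ k)) with (x ^ S (S k)). apply pow_nonzero. lra.
  - change (match k with 0%nat => 1 | S _ => INR k + 1 end) with (INR (S k)).
    change (match S k with 0%nat => 1 | S _ => INR (S k) + 1 end) with (INR (S (S k))).
    simpl. field. lra.
Qed.

Lemma is_derive_Wfun x : 0 < x -> is_derive Wfun x (dWfun x).
Proof.
  intros Hx. unfold Wfun, dWfun.
  pose proof (is_derive_vfun x Hx) as Hv.
  auto_derive; [now exists (dvfun x)|]. change (Derive (fun x => vfun x) x) with (Derive vfun x).
  rewrite (is_derive_unique _ _ _ Hv). ring.
Qed.

Lemma is_derive_dWfun x : 0 < x -> is_derive dWfun x (d2Wfun x).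
Proof.
  intros Hx. unfold dWfun, d2Wfun.
  pose proof (is_derive_vfun x Hx) as Hv. pose proof (is_derive_dvfun x Hx) as Hv1.
  auto_derive; [split; [now exists (dvfun x)|split; [now exists (d2vfun x)|exact I]]|].
  change (Derive (fun x => vfun x) x) with (Derive vfun x).
  change (Derive (fun x => dvfun x) x) with (Derive dvfun x).
  rewrite (is_derive_unique _ _ _ Hv), (is_derive_unique _ _ _ Hv1). ring.
Qed.

Lemma vfun_euler_eq x : 0 < x -> x ^ 2 * d2vfun x + INR (S k) * x * dvfun x = INR (S k) * vfun x.
Proof.
  intros Hx. unfold vfun, dvfun, d2vfun.
  assert (x ^ k <> 0) by (apply pow_nonzero; lra).
  rewrite !S_INR. simpl. field. lra.
Qed.

Hypothesis mu_pos : 0 < mu.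

Lemma vfun_pos x : 0 < H -> 0 < x -> 0 < vfun x.
Proof.
  intros HH Hx. unfold vfun.
  assert (0 < mu / x ^ S k) by (apply Rdiv_lt_0_compat; auto; apply pow_lt; lra). nra.
Qed.

Hypothesis H_gt1 : 1 < H.

Lemma d2Wfun_neg x : 0 < x -> d2Wfun x < 0.
Proof.
  intros Hx.
  set (y := mu / x ^ S (S k)).
  assert (Hxk : 0 < x ^ k) by (apply pow_lt; lra).
  assert (Hy : 0 < y) by (apply Rdiv_lt_0_compat; auto; apply pow_lt; lra).
  assert (E1 : vfun x = x * (y + H)) by (unfold vfun, y; simpl; field; lra).
  assert (E2 : dvfun x = H - INR (S k) * y) by (unfold dvfun, y; simpl; field; lra).
  assert (E3 : d2vfun x * x = INR (S (S k)) * INR (S k) * y)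
    by (unfold d2vfun, y; simpl; field; lra).
  unfold d2Wfun. rewrite E1, E2.
  replace (2 * (x * (y + H)) * d2vfun x) with (2 * (y + H) * (d2vfun x * x)) by ring.
  rewrite E3, !S_INR. assert (Hk := pos_INR k).
  assert (0 <= INR k * y) by nra. assert (0 <= INR k * y * y) by nra.
  assert (0 <= INR k * INR k * y * y) by nra. assert (0 <= INR k * H * y) by nra.
  assert (0 <= INR k * INR k * H * y) by nra.
  nra.
Qed.

Lemma dWfun_decr x y : 0 < x -> x < y -> dWfun y < dWfun x.
Proof.
  intros Hx Hxy.
  apply (strict_decr_of_derive_neg dWfun d2Wfun x y); try lra.
  - intros c Hc. apply is_derive_dWfun. lra.
  - intros c Hc. apply d2Wfun_neg. lra.
Qed.

Lemma Wfun_root_above x1 : 0 < x1 -> 0 <= Wfun x1 -> exists M, x1 <= M /\ Wfun M = 0.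
Proof.
  intros Hx1 W1.
  destruct (Req_dec (Wfun x1) 0) as [E|NE]; [exists x1; split; [lra|auto]|].
  set (x0 := x1 + 1 + / (H - 1)).
  assert (Hinv : 0 < / (H - 1)) by (apply Rinv_0_lt_compat; lra).
  assert (Hx0 : 1 < (H - 1) * x0).
  { unfold x0. replace ((H - 1) * (x1 + 1 + / (H - 1))) with ((H - 1) * (x1 + 1) + 1)
      by (field; lra). nra. }
  assert (W0 : Wfun x0 < 0).
  { assert (Hv : H * x0 < vfun x0).
    { unfold vfun. assert (0 < mu / x0 ^ S k); [|lra].
      apply Rdiv_lt_0_compat; auto; apply pow_lt; unfold x0; lra. }
    unfold Wfun. assert (1 < (H + 1) * x0) by (unfold x0 in *; nra).
    assert (0 < H * x0) by (unfold x0; nra). nra. }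
  destruct (Ranalysis5.IVT_interv (fun x => - Wfun x) x1 x0) as [M [HM EM]].
  - intros a Ha. apply continuity_pt_opp, continuity_pt_filterlim, ex_derive_continuous_R.
    eexists. apply is_derive_Wfun. lra.
  - unfold x0; lra.
  - lra.
  - lra.
  - exists M. split; lra.
Qed.

End ProfilePotential.

(** * Hypersurfaces of revolution in the half-space model *)

Lemma sin2_cos2_pow x : sin x ^ 2 + cos x ^ 2 = 1.
Proof. rewrite <- !Rsqr_pow2. apply sin2_cos2. Qed.

Lemma tan_lt_iff x y : 0 < x < PI / 2 -> 0 < y < PI / 2 -> tan x < tan y <-> x < y.
Proof.
  intros Hx Hy. split.
  - intros Hlt. apply Rnot_le_lt; intros Hle. destruct (Req_dec y x) as [->|Hne]; [lra|].
    pose proof (tan_increasing y x ltac:(lra) ltac:(lra) ltac:(lra)). lra.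
  - intros Hlt. apply tan_increasing; lra.
Qed.

Lemma cos2_one_plus_tan2 x : cos x <> 0 -> cos x ^ 2 * (1 + tan x ^ 2) = 1.
Proof.
  intros Hc. transitivity (sin x ^ 2 + cos x ^ 2); [|apply sin2_cos2_pow].
  unfold tan. field. exact Hc.
Qed.

(* [auto_derive] leaves eta-expanded [Derive (fun x => f x) y], which [rewrite] and [ring] do
   not identify with [Derive f y]. *)
Ltac eta_Derive :=
  repeat match goal with
  | |- context [Derive (fun x : R => ?f x) ?y] =>
      change (Derive (fun x : R => f x) y) with (Derive f y)
  end.

Section ProfileCurve.

Variable phi : R -> R.
Hypothesis phi_d1 : forall t, ex_derive phi t.
Hypothesis phi_d2 : forall t, ex_derive (Derive phi) t.

Lemma Derive_prof_r t : Derive (prof_r phi) t = exp t * (sin (phi t) + cos (phi t) * Derive phi t).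
Proof.
  apply is_derive_unique. unfold prof_r.
  auto_derive; [repeat split; apply phi_d1|]. eta_Derive. ring.
Qed.

Lemma Derive_prof_y t : Derive (prof_y phi) t = exp t * (cos (phi t) - sin (phi t) * Derive phi t).
Proof.
  apply is_derive_unique. unfold prof_y.
  auto_derive; [repeat split; apply phi_d1|]. eta_Derive. ring.
Qed.

Lemma Derive2_prof_r t : Derive (Derive (prof_r phi)) t =
  exp t * (sin (phi t) + 2 * cos (phi t) * Derive phi t - sin (phi t) * Derive phi t ^ 2
           + cos (phi t) * Derive (Derive phi) t).
Proof.
  rewrite (Derive_ext _ _ t Derive_prof_r). apply is_derive_unique.
  auto_derive; [repeat split; auto|]. eta_Derive. ring.
Qed.

Lemma Derive2_prof_y t : Derive (Derive (prof_y phi)) t =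
  exp t * (cos (phi t) - 2 * sin (phi t) * Derive phi t - cos (phi t) * Derive phi t ^ 2
           - sin (phi t) * Derive (Derive phi) t).
Proof.
  rewrite (Derive_ext _ _ t Derive_prof_y). apply is_derive_unique.
  auto_derive; [repeat split; auto|]. eta_Derive. ring.
Qed.

Lemma speed_profile t : speed phi t = exp t * sqrt (1 + Derive phi t ^ 2).
Proof.
  unfold speed. rewrite Derive_prof_r, Derive_prof_y.
  replace ((exp t * (sin (phi t) + cos (phi t) * Derive phi t)) ^ 2
           + (exp t * (cos (phi t) - sin (phi t) * Derive phi t)) ^ 2)
    with (exp t ^ 2 * ((sin (phi t) ^ 2 + cos (phi t) ^ 2) * (1 + Derive phi t ^ 2))) by ring.
  rewrite sin2_cos2_pow, Rmult_1_l.
  rewrite sqrt_mult by (try apply pow2_ge_0; pose proof (pow2_ge_0 (Derive phi t)); lra).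
  rewrite sqrt_pow2; auto. left; apply exp_pos.
Qed.

Let sqrt_pos t : 0 < sqrt (1 + Derive phi t ^ 2).
Proof. apply sqrt_lt_R0. pose proof (pow2_ge_0 (Derive phi t)). lra. Qed.

Lemma kappa1_profile t : kappa1 phi t =
  (sin (phi t) * (1 + Derive phi t ^ 2) - cos (phi t) * Derive (Derive phi) t)
  / sqrt (1 + Derive phi t ^ 2) ^ 3.
Proof.
  unfold kappa1. cbv zeta.
  rewrite Derive2_prof_r, Derive2_prof_y, Derive_prof_r, Derive_prof_y, speed_profile.
  unfold prof_y.
  pose proof (exp_pos t). pose proof (sqrt_pos t).
  assert (Hq : sqrt (1 + Derive phi t ^ 2) ^ 2 = 1 + Derive phi t ^ 2)
    by (apply pow2_sqrt; pose proof (pow2_ge_0 (Derive phi t)); lra).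
  pose proof (sin2_cos2_pow (phi t)) as Hsc.
  set (p := Derive phi t) in *. set (p2 := Derive (Derive phi) t).
  set (Q := sqrt (1 + p ^ 2)) in *.
  set (e := exp t) in *. set (s := sin (phi t)) in *. set (c := cos (phi t)) in *.
  replace ((e * (s + c * p)) * (e * (c - 2 * s * p - c * p ^ 2 - s * p2))
           - (e * (c - s * p)) * (e * (s + 2 * c * p - s * p ^ 2 + c * p2)))
    with (- e ^ 2 * (s ^ 2 + c ^ 2) * (p + p ^ 3 + p2)) by ring.
  replace (p + p ^ 3 + p2) with (p * Q ^ 2 + p2) by (rewrite Hq; ring).
  rewrite Hsc, <- Hq. field. lra.
Qed.

Hypothesis phi_range : forall t, 0 < phi t < PI / 2.

Let cos_pos t : 0 < cos (phi t).
Proof. apply cos_gt_0; pose proof (phi_range t); lra. Qed.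

Let sin_pos t : 0 < sin (phi t).
Proof. apply sin_gt_0; pose proof (phi_range t); lra. Qed.

Lemma metA_profile t : metA phi t = sqrt (1 + Derive phi t ^ 2) / cos (phi t).
Proof.
  unfold metA, prof_y. rewrite speed_profile. field.
  split; apply Rgt_not_eq; [apply cos_pos|apply exp_pos].
Qed.

Lemma warp_profile t : warp phi t = tan (phi t).
Proof.
  unfold warp, prof_r, prof_y, tan. field.
  split; apply Rgt_not_eq; [apply cos_pos|apply exp_pos].
Qed.

Lemma kappa2_profile t : kappa2 phi t = / (sin (phi t) * sqrt (1 + Derive phi t ^ 2)).
Proof.
  unfold kappa2. rewrite Derive_prof_r, Derive_prof_y, speed_profile. unfold prof_r, prof_y.
  pose proof (exp_pos t). pose proof (sin_pos t). pose proof (sqrt_pos t).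
  transitivity ((sin (phi t) ^ 2 + cos (phi t) ^ 2) / (sin (phi t) * sqrt (1 + Derive phi t ^ 2))).
  - field. repeat split; lra.
  - rewrite sin2_cos2_pow. field. lra.
Qed.

End ProfileCurve.

(** * The unduloid profile *)

Lemma profile_eq_solved k mu H x p : 0 < mu -> 0 < H -> 0 < x < PI / 2 ->
  mu = tan x ^ S k / (cos x * sqrt (1 + p ^ 2)) - H * tan x ^ S (S k) ->
  cos x * sqrt (1 + p ^ 2) = / vfun k mu H (tan x).
Proof.
  intros Hmu HH Hx E.
  assert (Hc : 0 < cos x) by (apply cos_gt_0; lra).
  assert (HT : 0 < tan x) by (apply tan_gt_0; lra).
  assert (HQ : 0 < sqrt (1 + p ^ 2)) by (apply sqrt_lt_R0; pose proof (pow2_ge_0 p); lra).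
  assert (HTk : 0 < tan x ^ k) by (apply pow_lt; auto).
  unfold vfun. rewrite E. simpl in *. field. repeat split; nra.
Qed.

Section Profile.

Variables (k : nat) (H mu tau : R) (phi : R -> R).
Hypothesis H_gt1 : 1 < H.
Hypothesis mu_pos : 0 < mu.
Hypothesis phi_smooth : forall (j : nat) (t : R), ex_derive_n phi j t.
Hypothesis phi_range : forall t, 0 < phi t < PI / 2.
Hypothesis phi_ode : unduloid_eq (S (S k)) H mu phi.
Hypothesis tau_pos : 0 < tau.
Hypothesis tau_minimal : forall s, 0 < s < tau -> exists t, phi (t + s) <> phi t.
Hypothesis phi_sym : forall (j : Z) (t : R), phi (IZR j * tau - t) = phi t.
Hypothesis phi_nonconst : exists t1 t2, phi t1 <> phi t2.
Hypothesis phi_min : forall t, phi 0 <= phi t.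

Local Notation X t := (tan (phi t)).
Local Notation v := (vfun k mu H).
Local Notation dv := (dvfun k mu H).
Local Notation W := (Wfun k mu H).
Local Notation dW := (dWfun k mu H).
Local Notation accel t :=
  ((1 + X t ^ 2) * (dW (X t) - 2 * Derive phi t ^ 2 * v (X t) * dv (X t)) / (2 * v (X t) ^ 2)).

Lemma phi_ex_derive t : ex_derive phi t.
Proof. exact (phi_smooth 1 t). Qed.

Lemma phi_ex_derive2 t : ex_derive (Derive phi) t.
Proof. exact (phi_smooth 2 t). Qed.

Lemma phi_ex_derive3 t : ex_derive (Derive (Derive phi)) t.
Proof. exact (phi_smooth 3 t). Qed.

Lemma cos_phi_pos t : 0 < cos (phi t).
Proof. apply cos_gt_0; pose proof (phi_range t); lra. Qed.

Lemma X_pos t : 0 < X t.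
Proof. apply tan_gt_0; apply phi_range. Qed.

Lemma v_X_pos t : 0 < v (X t).
Proof. apply vfun_pos; [lra|lra|apply X_pos]. Qed.

Lemma profile_speed t : cos (phi t) * sqrt (1 + Derive phi t ^ 2) = / v (X t).
Proof. apply profile_eq_solved; [lra|lra|apply phi_range|apply phi_ode]. Qed.

Lemma profile_energy t : Derive phi t ^ 2 * v (X t) ^ 2 = W (X t).
Proof.
  pose proof (profile_speed t) as E. pose proof (v_X_pos t). pose proof (cos_phi_pos t).
  assert (Hq : sqrt (1 + Derive phi t ^ 2) ^ 2 = 1 + Derive phi t ^ 2)
    by (apply pow2_sqrt; pose proof (pow2_ge_0 (Derive phi t)); lra).
  assert (Hsq : cos (phi t) ^ 2 * (1 + Derive phi t ^ 2) * v (X t) ^ 2 = 1).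
  { rewrite <- Hq. replace (cos (phi t) ^ 2 * sqrt (1 + Derive phi t ^ 2) ^ 2 * v (X t) ^ 2)
      with ((cos (phi t) * sqrt (1 + Derive phi t ^ 2) * v (X t)) ^ 2) by ring.
    rewrite E. field. lra. }
  pose proof (cos2_one_plus_tan2 (phi t) ltac:(lra)) as Hct.
  unfold Wfun. apply (Rmult_eq_reg_l (cos (phi t) ^ 2)); [|apply pow_nonzero; lra].
  nra.
Qed.

Lemma a_fun_eq t : a_fun phi t = Derive phi t * v (X t).
Proof.
  unfold a_fun. rewrite profile_speed. field. apply Rgt_not_eq, v_X_pos.
Qed.

Lemma phi_even t : phi (- t) = phi t.
Proof. rewrite <- (phi_sym 0 t). f_equal. simpl. ring. Qed.

Lemma phi_periodic (j : Z) t : phi (t + IZR j * tau) = phi t.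
Proof. rewrite <- (phi_even t), <- (phi_sym j (- t)). f_equal. ring. Qed.

Lemma phi_critical_half_periods (j : Z) : Derive phi (IZR j * tau / 2) = 0.
Proof.
  set (c := IZR j * tau).
  assert (E : Derive phi (c / 2) = - Derive phi (c - c / 2)).
  { rewrite <- (is_derive_unique _ _ _ (is_derive_reflect phi c (c / 2) (phi_ex_derive _))).
    apply Derive_ext. intros u. symmetry. apply phi_sym. }
  replace (c - c / 2) with (c / 2) in E by field. lra.
Qed.

Lemma phi_not_eventually_const t0 : exists t1, t0 < t1 /\ phi t1 <> phi t0.
Proof.
  destruct phi_nonconst as [t1 [t2 Hne]].
  assert (Hex : exists t', phi t' <> phi t0).
  { destruct (Req_dec (phi t1) (phi t0)); [exists t2|exists t1]; congruence. }
  destruct Hex as [t' Ht'].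
  destruct (floor_ex ((t0 - t') / tau)) as [j Hj].
  exists (t' + IZR (j + 1) * tau). rewrite phi_periodic. split; auto.
  rewrite plus_IZR.
  assert (Q : (t0 - t') / tau * tau < (IZR j + 1) * tau) by (apply Rmult_lt_compat_r; lra).
  replace ((t0 - t') / tau * tau) with (t0 - t') in Q by (field; lra). lra.
Qed.

Lemma Derive_v_X t : Derive v (X t) = dv (X t).
Proof. apply is_derive_unique, is_derive_vfun, X_pos. Qed.

Lemma Derive_W_X t : Derive W (X t) = dW (X t).
Proof. apply is_derive_unique, is_derive_Wfun, X_pos. Qed.

Lemma Derive_dW_X t : Derive dW (X t) = d2Wfun k mu H (X t).
Proof. apply is_derive_unique, is_derive_dWfun, X_pos. Qed.

Lemma Derive_tan_phi t : Derive tan (phi t) = X t ^ 2 + 1.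
Proof. apply is_derive_unique, is_derive_tan, Rgt_not_eq, cos_phi_pos. Qed.

Ltac solve_ex_derive :=
  repeat match goal with
  | |- _ /\ _ => split
  | |- True => exact I
  | |- ex_derive (fun x => vfun _ _ _ x) _ => eexists; apply is_derive_vfun, X_pos
  | |- ex_derive (fun x => dvfun _ _ _ x) _ => eexists; apply is_derive_dvfun, X_pos
  | |- ex_derive (fun x => Wfun _ _ _ x) _ => eexists; apply is_derive_Wfun, X_pos
  | |- ex_derive (fun x => dWfun _ _ _ x) _ => eexists; apply is_derive_dWfun, X_pos
  | |- ex_derive (fun x => tan x) _ => eexists; apply is_derive_tan, Rgt_not_eq, cos_phi_pos
  | |- ex_derive (fun x => Derive (Derive phi) x) _ => apply phi_ex_derive3
  | |- ex_derive (fun x => Derive phi x) _ => apply phi_ex_derive2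
  | |- ex_derive (fun x => phi x) _ => apply phi_ex_derive
  end.

Ltac simpl_Derive :=
  eta_Derive; rewrite ?Derive_v_X, ?Derive_W_X, ?Derive_dW_X, ?Derive_tan_phi.

Lemma phi'_mul_phi''_eq t : Derive phi t * (Derive (Derive phi) t - accel t) = 0.
Proof.
  pose proof (v_X_pos t) as Hv.
  set (lhs := 2 * Derive phi t * Derive (Derive phi) t * v (X t) ^ 2
     + Derive phi t ^ 2 * (2 * v (X t) * dv (X t) * ((X t ^ 2 + 1) * Derive phi t))).
  set (rhs := dW (X t) * ((X t ^ 2 + 1) * Derive phi t)).
  assert (D1 : is_derive (fun t => Derive phi t ^ 2 * v (X t) ^ 2) t lhs).
  { auto_derive; [solve_ex_derive|simpl_Derive; unfold lhs; ring]. }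
  assert (D2 : is_derive (fun t => Derive phi t ^ 2 * v (X t) ^ 2) t rhs).
  { apply (is_derive_ext (fun t => W (X t))); [intros u; symmetry; apply profile_energy|].
    auto_derive; [solve_ex_derive|simpl_Derive; unfold rhs; ring]. }
  assert (E : lhs = rhs) by (rewrite <- (is_derive_unique _ _ _ D1); apply is_derive_unique, D2).
  unfold lhs, rhs in E. apply (Rmult_eq_reg_l (2 * v (X t) ^ 2)).
  2:{ apply Rgt_not_eq, Rmult_lt_0_compat; [lra|apply pow_lt, Hv]. }
  transitivity (lhs - rhs); unfold lhs, rhs; [field; lra|lra].
Qed.

Lemma W_X_nonneg t : 0 <= W (X t).
Proof. rewrite <- profile_energy. apply Rmult_le_pos; apply pow2_ge_0. Qed.

Lemma W_X0 : W (X 0) = 0.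
Proof.
  rewrite <- profile_energy.
  replace 0 with (IZR 0 * tau / 2) at 1 by (simpl; field).
  rewrite phi_critical_half_periods. ring.
Qed.

Lemma X0_le t : X 0 <= X t.
Proof.
  destruct (Req_dec (phi 0) (phi t)) as [->|Hne]; [lra|].
  left. apply tan_lt_iff; try apply phi_range. pose proof (phi_min t). lra.
Qed.

Lemma exists_X_gt_X0 : exists t, X 0 < X t.
Proof.
  destruct phi_nonconst as [t1 [t2 Hne]].
  assert (Hex : exists t, phi 0 <> phi t).
  { destruct (Req_dec (phi 0) (phi t1)); [exists t2|exists t1]; congruence. }
  destruct Hex as [t Ht]. exists t.
  apply tan_lt_iff; try apply phi_range. pose proof (phi_min t). lra.
Qed.

Lemma dW_X0_pos : 0 < dW (X 0).
Proof.
  destruct exists_X_gt_X0 as [t Ht].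
  apply (concave_derive_pos_at_root W dW (is_derive_Wfun k mu H) (dWfun_decr k mu H mu_pos H_gt1)
           (X 0) (X t)); auto using X_pos, W_X0, W_X_nonneg.
Qed.

Lemma exists_upper_root : exists M, X 0 < M /\ W M = 0 /\ forall t, X t <= M.
Proof.
  destruct exists_X_gt_X0 as [t3 Ht3].
  destruct (Wfun_root_above k mu H mu_pos H_gt1 (X t3) (X_pos t3) (W_X_nonneg t3)) as [M [HM WM]].
  exists M. split; [lra|]. split; auto.
  intros t. apply Rnot_lt_le; intros Hlt.
  pose proof (concave_neg_beyond_roots W dW (is_derive_Wfun k mu H) (dWfun_decr k mu H mu_pos H_gt1)
           (X 0) M (X t) (X_pos 0) ltac:(lra) Hlt W_X0 WM).
  pose proof (W_X_nonneg t). lra.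
Qed.

Section UpperRoot.

Variable M : R.
Hypothesis X0_lt_M : X 0 < M.
Hypothesis W_M : W M = 0.
Hypothesis X_le_M : forall t, X t <= M.

Lemma dW_M_neg : dW M < 0.
Proof.
  apply (concave_derive_neg_at_root W dW (is_derive_Wfun k mu H) (dWfun_decr k mu H mu_pos H_gt1)
           (X 0)); auto using X_pos, W_X0.
Qed.

Lemma W_X_eq0_iff t : W (X t) = 0 <-> X t = X 0 \/ X t = M.
Proof.
  split.
  - intros HW. destruct (Req_dec (X t) (X 0)) as [|Hne0]; [now left|].
    destruct (Req_dec (X t) M) as [|HM]; [now right|]. exfalso.
    pose proof (concave_pos_between_roots W dW (is_derive_Wfun k mu H)
      (dWfun_decr k mu H mu_pos H_gt1) (X 0) M (X t) (X_pos 0)) as Hpos.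
    assert (X 0 < X t) by (destruct (X0_le t); [auto|congruence]).
    assert (X t < M) by (destruct (X_le_M t); [auto|congruence]).
    assert (0 < W (X t)) by (apply Hpos; auto using W_X0). lra.
  - intros [-> | ->]; auto using W_X0.
Qed.

Lemma phi_critical_iff t : Derive phi t = 0 <-> X t = X 0 \/ X t = M.
Proof.
  rewrite <- W_X_eq0_iff, <- profile_energy. split.
  - intros ->. ring.
  - intros E. pose proof (v_X_pos t). apply pow2_eq_0.
    apply (Rmult_eq_reg_r (v (X t) ^ 2)); [lra|apply pow_nonzero; lra].
Qed.

Lemma dW_X_critical_neq0 t : Derive phi t = 0 -> dW (X t) <> 0.
Proof.
  intros Hc. pose proof dW_X0_pos. pose proof dW_M_neg.
  destruct (proj1 (phi_critical_iff t) Hc) as [-> | ->]; lra.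
Qed.

Lemma phi''_eq t : Derive (Derive phi) t = accel t.
Proof.
  enough (E : forall t, Derive (Derive phi) t - accel t = 0) by (specialize (E t); lra).
  apply (derive_mul_eq0_cofactor_eq0 phi); auto using phi_ex_derive, phi_ex_derive2,
    phi'_mul_phi''_eq, phi_not_eventually_const.
  - intros u. apply ex_derive_continuous_R. auto_derive; solve_ex_derive.
    pose proof (v_X_pos u). apply Rgt_not_eq. nra.
  - intros u Hd1 Hd2 E. rewrite Hd1, Hd2 in E.
    pose proof (dW_X_critical_neq0 u Hd1) as HdW.
    pose proof (v_X_pos u). pose proof (pow2_ge_0 (X u)).
    apply HdW. apply (Rmult_eq_reg_l (- (1 + X u ^ 2) / (2 * v (X u) ^ 2))).
    + rewrite Rmult_0_r, <- E. field. lra.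
    + apply Rlt_not_eq, Rdiv_neg_pos; [lra|apply Rmult_lt_0_compat; [lra|apply pow_lt; lra]].
Qed.

Lemma phi''_at_critical t : Derive phi t = 0 ->
  Derive (Derive phi) t = (1 + X t ^ 2) * dW (X t) / (2 * v (X t) ^ 2).
Proof. intros Hc. rewrite phi''_eq, Hc. pose proof (v_X_pos t). field. lra. Qed.

Let Psi (y : R) : R := W (tan y) / v (tan y) ^ 2.

Lemma phi_turning_solution : turning_solution (phi 0) (atan M) Psi phi.
Proof.
  assert (Hsign : forall t, Derive phi t = 0 -> 0 < Derive (Derive phi) t * dW (X t)).
  { intros t Hc. rewrite phi''_at_critical by exact Hc.
    pose proof (dW_X_critical_neq0 t Hc). pose proof (v_X_pos t). pose proof (pow2_ge_0 (X t)).
    replace ((1 + X t ^ 2) * dW (X t) / (2 * v (X t) ^ 2) * dW (X t))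
      with ((1 + X t ^ 2) * dW (X t) ^ 2 / (2 * v (X t) ^ 2)) by (field; lra).
    apply Rdiv_lt_0_compat; [|apply Rmult_lt_0_compat; [lra|apply pow_lt; lra]].
    apply Rmult_lt_0_compat; [lra|apply pow2_gt_0; assumption]. }
  split.
  - apply phi_ex_derive.
  - apply phi_ex_derive2.
  - intros t. split; [apply phi_min|].
    rewrite <- (atan_tan (phi t)) by (pose proof (phi_range t); lra).
    destruct (X_le_M t) as [Hlt| ->]; [left; apply atan_increasing, Hlt|right; reflexivity].
  - intros t. unfold Psi. rewrite <- profile_energy. field. apply Rgt_not_eq, v_X_pos.
  - intros t Ht.
    assert (Hc : Derive phi t = 0) by (apply phi_critical_iff; left; now rewrite Ht).
    specialize (Hsign t Hc). rewrite Ht in Hsign. pose proof dW_X0_pos. nra.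
  - intros t Ht.
    assert (HXt : X t = M) by (rewrite Ht; apply tan_atan).
    assert (Hc : Derive phi t = 0) by (apply phi_critical_iff; now right).
    specialize (Hsign t Hc). rewrite HXt in Hsign. pose proof dW_M_neg. nra.
Qed.

Lemma phi_symmetric_at_critical t1 : Derive phi t1 = 0 -> forall t, phi (2 * t1 - t) = phi t.
Proof.
  assert (HM : 0 < M) by (pose proof (X_pos 0); lra).
  assert (HB : 0 < atan M < PI / 2).
  { rewrite <- atan_0. split; [apply atan_increasing, HM|]. destruct (atan_bound M); lra. }
  assert (Hin : forall y, phi 0 < y < atan M -> 0 < y < PI / 2 /\ X 0 < tan y < M).
  { intros y Hy. assert (0 < y < PI / 2) by (pose proof (phi_range 0); lra).
    split; auto. rewrite <- (tan_atan M).
    split; apply tan_lt_iff; try apply phi_range; auto; lra. }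
  intros Hcrit. apply (ts_symmetric_at_critical (phi 0) (atan M) Psi);
    [| | | |exact phi_turning_solution|exact Hcrit].
  - intros y Hy. destruct (Hin y Hy) as [Hy' HXy]. pose proof (X_pos 0).
    assert (Hc : cos y <> 0) by (apply Rgt_not_eq, cos_gt_0; lra).
    assert (Hv : 0 < v (tan y)) by (apply vfun_pos; lra).
    apply ex_derive_continuous_R. unfold Psi. auto_derive.
    repeat split; try (eexists; apply is_derive_tan, Hc).
    + eexists; apply is_derive_Wfun; lra.
    + eexists; apply is_derive_vfun; lra.
    + rewrite Rmult_1_r. apply Rgt_not_eq, Rmult_lt_0_compat; lra.
  - intros y Hy. destruct (Hin y Hy) as [Hy' HXy]. pose proof (X_pos 0). unfold Psi.
    apply Rdiv_lt_0_compat; [|apply pow_lt, vfun_pos; lra].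
    apply (concave_pos_between_roots W dW (is_derive_Wfun k mu H) (dWfun_decr k mu H mu_pos H_gt1)
      (X 0) M); auto using X_pos, W_X0.
  - unfold Psi. rewrite W_X0. unfold Rdiv. ring.
  - unfold Psi. rewrite tan_atan, W_M. unfold Rdiv. ring.
Qed.

(* A critical point [t] makes [2 t] a period (compose the reflections about [0] and [t]). *)
Lemma phi_critical_points t : Derive phi t = 0 <-> exists j : Z, t = IZR j * tau / 2.
Proof.
  split; [|intros [j ->]; apply phi_critical_half_periods].
  intros Hc.
  assert (Hper2t : forall u, phi (u + 2 * t) = phi u).
  { intros u. rewrite <- (phi_even u), <- (phi_symmetric_at_critical t Hc (- u)). f_equal. ring. }
  destruct (floor_ex (2 * t / tau)) as [j Hj]. exists j.
  set (s := 2 * t - IZR j * tau).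
  assert (Hs : 0 <= s < tau).
  { unfold s. replace (2 * t) with (2 * t / tau * tau) by (field; lra).
    split; [|replace tau with (1 * tau) at 3 by ring]; nra. }
  destruct (Req_dec s 0) as [Hs0|Hs0]; [unfold s in Hs0; lra|exfalso].
  destruct (tau_minimal s ltac:(lra)) as [u Hu]. apply Hu.
  unfold s. replace (u + (2 * t - IZR j * tau)) with ((u + 2 * t) + IZR (- j) * tau)
    by (rewrite opp_IZR; ring).
  rewrite phi_periodic, Hper2t. reflexivity.
Qed.

Lemma is_derive_a_fun t :
  is_derive (a_fun phi) t ((1 + X t ^ 2) * dW (X t) / (2 * v (X t))).
Proof.
  pose proof (v_X_pos t) as Hv.
  apply (is_derive_ext (fun t => Derive phi t * v (X t))); [intros u; symmetry; apply a_fun_eq|].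
  auto_derive; [solve_ex_derive|]. simpl_Derive. rewrite phi''_eq. unfold dWfun. field. lra.
Qed.

Lemma a_fun_zeros t : a_fun phi t = 0 <-> exists j : Z, t = IZR j * tau / 2.
Proof.
  rewrite <- phi_critical_points, a_fun_eq. pose proof (v_X_pos t).
  split; [intros E; destruct (Rmult_integral _ _ E); lra|intros ->; ring].
Qed.

Lemma Derive_a_fun_eq0_iff t : Derive (a_fun phi) t = 0 <-> dW (X t) = 0.
Proof.
  rewrite (is_derive_unique _ _ _ (is_derive_a_fun t)).
  pose proof (v_X_pos t). pose proof (pow2_ge_0 (X t)).
  split; [|intros ->; field; lra].
  intros E.
  assert (Hpos : 0 < (1 + X t ^ 2) / (2 * v (X t))) by (apply Rdiv_lt_0_compat; lra).
  replace ((1 + X t ^ 2) * dW (X t) / (2 * v (X t))) with ((1 + X t ^ 2) / (2 * v (X t)) * dW (X t))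
    in E by (field; lra).
  destruct (Rmult_integral _ _ E); lra.
Qed.

Lemma phi'_pos_first_half t : 0 < t < tau / 2 -> 0 < Derive phi t.
Proof.
  intros Ht.
  assert (Hnz : forall u, 0 < u < tau / 2 -> Derive phi u <> 0).
  { intros u Hu Hc. apply phi_critical_points in Hc. destruct Hc as [j ->].
    assert (Hj0 : 0 < IZR j) by (apply (Rmult_lt_reg_r (tau / 2)); lra).
    assert (Hj1 : IZR j < 1) by (apply (Rmult_lt_reg_r (tau / 2)); lra).
    apply lt_IZR in Hj0. apply lt_IZR in Hj1. lia. }
  assert (Hd0 : Derive phi 0 = 0).
  { replace 0 with (IZR 0 * tau / 2) at 1 by (simpl; field). apply phi_critical_half_periods. }
  assert (Hacc0 : 0 < Derive (Derive phi) 0).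
  { rewrite phi''_at_critical by exact Hd0.
    pose proof dW_X0_pos. pose proof (v_X_pos 0). pose proof (pow2_ge_0 (X 0)).
    apply Rdiv_lt_0_compat; [nra|apply Rmult_lt_0_compat; [lra|apply pow_lt; lra]]. }
  destruct (is_derive_pos_right (Derive phi) 0 _ (Derive_correct _ _ (phi_ex_derive2 0)) Hacc0)
    as [d [Hd Hright]].
  apply Rnot_le_lt; intros Hle.
  set (u := Rmin d t / 2).
  assert (Hu : 0 < u < t) by (unfold u, Rmin; destruct Rle_dec; lra).
  assert (Hdu : 0 < Derive phi u).
  { rewrite <- Hd0. apply Hright. unfold u, Rmin in *; destruct Rle_dec; lra. }
  assert (Hcont : continuity (Derive phi)) by (apply continuity_of_ex_derive, phi_ex_derive2).
  destruct (IVT_gen (Derive phi) u t 0 Hcont) as [x [Hx Ex]].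
  - rewrite Rmin_right, Rmax_left; lra.
  - rewrite Rmin_left, Rmax_right in Hx by lra. apply (Hnz x); [lra|exact Ex].
Qed.

Lemma phi_incr_first_half x y : 0 <= x -> x < y -> y <= tau / 2 -> phi x < phi y.
Proof.
  apply (strict_incr_of_derive_pos phi (Derive phi)).
  - intros c _. apply Derive_correct, phi_ex_derive.
  - apply phi'_pos_first_half.
Qed.

Lemma X_half_period : X (tau / 2) = M.
Proof.
  assert (Hc : Derive phi (tau / 2) = 0).
  { replace (tau / 2) with (IZR 1 * tau / 2) by (simpl; field). apply phi_critical_half_periods. }
  destruct (proj1 (phi_critical_iff _) Hc) as [E|E]; auto. exfalso.
  pose proof (phi_incr_first_half 0 (tau / 2) ltac:(lra) ltac:(lra) ltac:(lra)) as Hlt.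
  apply (tan_lt_iff _ _ (phi_range 0) (phi_range (tau / 2))) in Hlt. lra.
Qed.

Lemma dW_X_decr_first_half x y : 0 <= x -> x < y -> y <= tau / 2 -> dW (X y) < dW (X x).
Proof.
  intros Hx Hxy Hy. apply dWfun_decr; auto using X_pos.
  apply tan_lt_iff; try apply phi_range. apply phi_incr_first_half; auto.
Qed.

Lemma dW_X_unique_zero_first_half :
  exists z, 0 < z < tau / 2 /\ dW (X z) = 0 /\ forall x, 0 <= x <= tau / 2 -> dW (X x) = 0 -> x = z.
Proof.
  pose proof dW_X0_pos as H0pos. pose proof dW_M_neg as HMneg. rewrite <- X_half_period in HMneg.
  assert (Hcont : continuity (fun t => dW (X t))).
  { apply continuity_of_ex_derive. intros t. auto_derive. solve_ex_derive. }
  destruct (IVT_gen _ 0 (tau / 2) 0 Hcont) as [z [Hz Ez]]; [rewrite Rmin_right, Rmax_left; lra|].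
  rewrite Rmin_left, Rmax_right in Hz by lra.
  assert (Hz' : 0 < z < tau / 2).
  { split; apply Rnot_le_lt; intros Hle;
      [replace z with 0 in Ez|replace z with (tau / 2) in Ez]; lra. }
  exists z. split; [exact Hz'|split; [exact Ez|]].
  intros x Hx Ex. destruct (Rtotal_order x z) as [Hlt|[Heq|Hgt]]; auto.
  - pose proof (dW_X_decr_first_half x z ltac:(lra) Hlt ltac:(lra)). lra.
  - pose proof (dW_X_decr_first_half z x ltac:(lra) Hgt ltac:(lra)). lra.
Qed.

Lemma Derive_a_fun_zeros : exists z1 z2 : R,
  0 < z1 < tau / 2 /\ tau / 2 < z2 < tau /\
  Derive (a_fun phi) z1 = 0 /\ Derive (a_fun phi) z2 = 0 /\
  (forall z, 0 <= z <= tau -> Derive (a_fun phi) z = 0 -> z = z1 \/ z = z2).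
Proof.
  destruct dW_X_unique_zero_first_half as [z [Hz [Ez Huniq]]].
  assert (Hsym : forall t, dW (X (tau - t)) = dW (X t)).
  { intros t. replace (tau - t) with (IZR 1 * tau - t) by (simpl; ring). now rewrite phi_sym. }
  exists z, (tau - z). rewrite !Derive_a_fun_eq0_iff, Hsym.
  split; [exact Hz|split; [lra|split; [exact Ez|split; [exact Ez|]]]].
  intros x Hx Ex. apply Derive_a_fun_eq0_iff in Ex. destruct (Rle_lt_dec x (tau / 2)).
  - left. apply Huniq; auto; lra.
  - right. enough (tau - x = z) by lra. apply Huniq; [lra|now rewrite Hsym].
Qed.

Lemma sin_phi_eq t : sin (phi t) = X t * cos (phi t).
Proof. pose proof (cos_phi_pos t). unfold tan. field. lra. Qed.

Lemma sqrt_profile_eq t : sqrt (1 + Derive phi t ^ 2) = / (cos (phi t) * v (X t)).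
Proof.
  pose proof (profile_speed t) as E. pose proof (cos_phi_pos t). pose proof (v_X_pos t).
  apply (Rmult_eq_reg_l (cos (phi t))); [|lra]. rewrite E. field. lra.
Qed.

Lemma one_plus_X2 t : 1 + X t ^ 2 = / cos (phi t) ^ 2.
Proof.
  pose proof (cos_phi_pos t).
  apply (Rmult_eq_reg_l (cos (phi t) ^ 2)); [|apply pow_nonzero; lra].
  rewrite cos2_one_plus_tan2 by lra. field. lra.
Qed.

Lemma metA_eq t : metA phi t = (1 + X t ^ 2) / v (X t).
Proof.
  rewrite (metA_profile phi phi_ex_derive phi_range), sqrt_profile_eq, one_plus_X2.
  pose proof (cos_phi_pos t). pose proof (v_X_pos t). field. lra.
Qed.

Lemma kappa2_eq t : kappa2 phi t = v (X t) / X t.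
Proof.
  rewrite (kappa2_profile phi phi_ex_derive phi_range), sqrt_profile_eq.
  rewrite sin_phi_eq. pose proof (cos_phi_pos t). pose proof (v_X_pos t). pose proof (X_pos t).
  field. lra.
Qed.

Lemma kappa1_eq t : kappa1 phi t = dv (X t).
Proof.
  pose proof (cos_phi_pos t). pose proof (v_X_pos t).
  assert (Hp2 : Derive phi t ^ 2 = (/ (cos (phi t) * v (X t))) ^ 2 - 1).
  { rewrite <- sqrt_profile_eq, pow2_sqrt; [ring|]. pose proof (pow2_ge_0 (Derive phi t)). lra. }
  rewrite (kappa1_profile phi phi_ex_derive phi_ex_derive2), phi''_eq, sqrt_profile_eq.
  rewrite one_plus_X2, Hp2, sin_phi_eq. unfold dWfun. field. lra.
Qed.

Lemma Jacobi_flux_eq t :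
  warp phi t ^ S k * Derive (a_fun phi) t / metA phi t = X t ^ S k * dW (X t) / 2.
Proof.
  rewrite (warp_profile phi phi_range), metA_eq, (is_derive_unique _ _ _ (is_derive_a_fun t)).
  pose proof (v_X_pos t). pose proof (pow2_ge_0 (X t)). field. lra.
Qed.

Lemma a_fun_Jacobi t :
  lapLB (S (S k)) phi (a_fun phi) t - Vpot (S (S k)) phi t * a_fun phi t = 0.
Proof.
  unfold lapLB, Vpot, normB2. change (S (S k) - 1)%nat with (S k).
  rewrite (Derive_ext _ _ t Jacobi_flux_eq).
  rewrite (is_derive_unique (fun s : R => X s ^ S k * dW (X s) / 2) t
    ((1 + X t ^ 2) * Derive phi t
       * (INR (S k) * X t ^ k * dW (X t) + X t ^ S k * d2Wfun k mu H (X t)) / 2)).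
  2:{ auto_derive; [solve_ex_derive|]. simpl_Derive.
      change (match k with 0%nat => 1 | S _ => INR k + 1 end) with (INR (S k)). cbn [pow]. field. }
  rewrite metA_eq, (warp_profile phi phi_range), kappa1_eq, kappa2_eq, a_fun_eq.
  pose proof (X_pos t) as HX. pose proof (v_X_pos t). pose proof (pow2_ge_0 (X t)).
  assert (Hd2v : d2vfun k mu (X t)
    = (INR (S k) * v (X t) - INR (S k) * X t * dv (X t)) / X t ^ 2).
  { rewrite <- (vfun_euler_eq k mu H (X t) HX). field. lra. }
  unfold d2Wfun, dWfun. rewrite Hd2v, !S_INR. simpl. field.
  repeat split; try lra. apply pow_nonzero. lra.
Qed.

End UpperRoot.
End Profile.

Theorem lemma3p5 (n : nat) (H mu : R) (phi : R -> R) (tau : R) :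
  (2 <= n)%nat -> 1 < H -> 0 < mu ->
  (* phi : R -> (0, pi/2) smooth, solving the profile equation *)
  (forall (k : nat) (t : R), ex_derive_n phi k t) ->
  (forall t, 0 < phi t < PI / 2) ->
  unduloid_eq n H mu phi ->
  (* tau = tau(mu) is the (minimal) period of phi *)
  0 < tau ->
  (forall t, phi (t + tau) = phi t) ->
  (forall s, 0 < s < tau -> exists t, phi (t + s) <> phi t) ->
  (* phi is symmetric about the points k tau / 2 *)
  (forall (k : Z) (t : R), phi (IZR k * tau - t) = phi t) ->
  (* not a cylinder: phi nonconstant *)
  (exists t1 t2, phi t1 <> phi t2) ->
  (* normalization phi(0) = alpha_-(mu) = min phi *)
  (forall t, phi 0 <= phi t) ->
  (forall t, lapLB n phi (a_fun phi) t - Vpot n phi t * a_fun phi t = 0)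
  /\ (forall t, a_fun phi t = 0 <-> exists k : Z, t = IZR k * tau / 2)
  /\ (exists z1 z2 : R,
        0 < z1 < tau / 2 /\ tau / 2 < z2 < tau /\
        Derive (a_fun phi) z1 = 0 /\ Derive (a_fun phi) z2 = 0 /\
        (forall z, 0 <= z <= tau -> Derive (a_fun phi) z = 0 -> z = z1 \/ z = z2)).
Proof.
  intros Hn HH Hmu Hsmooth Hrange Hode Htau _ Hminimal Hsym Hnonconst Hmin.
  destruct n as [|[|k]]; [lia|lia|].
  destruct (exists_upper_root k H mu tau phi HH Hmu Hsmooth Hrange Hode Hsym Hnonconst Hmin)
    as [M [HM [WM HXM]]].
  split; [|split].
  - intros t. apply (a_fun_Jacobi k H mu tau phi) with (M := M); auto.
  - intros t. apply (a_fun_zeros k H mu tau phi) with (M := M); auto.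
  - apply (Derive_a_fun_zeros k H mu tau phi) with (M := M); auto.
Qed.
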